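(* Let $G = K_m \otimes K_n$ with $m \geq 3$ and $m \leq n \leq 2m-2$. Then $\dim(G) \geq \left\lceil \frac{2}{3}(m+n-2) \right\rceil$.
   Context: $K_r$ is the complete graph on $r$ vertices. The tensor product $G\otimes H$ has vertex set $V(G)\times V(H)$, with $(u,v)$ adjacent to $(x,y)$ iff $ux\in E(G)$ and $vy\in E(H)$. For a connected graph and an ordered set $W=\{w_1,\dots,w_k\}$ of vertices, $r(v\mid W)=(d(v,w_1),\dots,d(v,w_k))$; $W$ is resolving if distinct vertices have distinct representations; $\dim(G)$ is the minimum size of a resolving set. *)

From mathcomp Require Import all_boot.
Set Implicit Arguments. Unset Strict Implicit. Unset Printing Implicit Defensive.

Definition complete_graph (r : nat) : rel 'I_r := fun x y => x != y.
Arguments complete_graph r : clear implicits.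

Definition tensor (T1 T2 : finType) (e1 : rel T1) (e2 : rel T2) : rel (T1 * T2) :=
  fun p q => e1 p.1 q.1 && e2 p.2 q.2.

Definition ball (T : finType) (e : rel T) (k : nat) (x : T) : {set T} :=
  iter k (fun S => S :|: [set y | [exists z in S, e z y]]) [set x].

(* Graph distance: least k with y within k steps of x
   (equals #|T| if y is unreachable; in a connected graph it is the usual distance). *)
Definition dist (T : finType) (e : rel T) (x y : T) : nat :=
  find (fun k => y \in ball e k x) (iota 0 #|T|).

Definition resolving (T : finType) (e : rel T) (W : {set T}) : bool :=
  [forall x, forall y, [forall w in W, dist e x w == dist e y w] ==> (x == y)].

(* Metric dimension: minimum size of a resolving set (V itself always resolves). *)
Definition metric_dim (T : finType) (e : rel T) : nat :=
  \big[minn/#|T|]_(W : {set T} | resolving e W) #|W|.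

From mathcomp Require Import all_boot zify.
Set Implicit Arguments. Unset Strict Implicit. Unset Printing Implicit Defensive.

(* In K_m (x) K_n with m, n >= 3, two distinct vertices are at distance 1 if
   they differ in both coordinates and at distance 2 if they share a row or a
   column.  So a vertex outside a resolving set W is determined by the set of
   points of W collinear with it; hence at most one row and at most one column
   miss W, at most one point of W is alone in both its row and its column, and
   these three situations never occur together.  Summing
   2 <= r + [r = 1] + 2 [r = 0] over all rows and columns, r being the number
   of points of W on the line, then gives 2 (m + n) <= 3 |W| + 4. *)

Section Distance.
Variables (T : finType) (e : rel T).

Lemma in_ball0 x y : (y \in ball e 0 x) = (y == x).
Proof. by rewrite /ball /= inE. Qed.

Lemma in_ballS k x y :
  (y \in ball e k.+1 x) = (y \in ball e k x) || [exists z in ball e k x, e z y].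
Proof. by rewrite /ball iterS in_setU inE. Qed.

Lemma in_ball1 x y : (y \in ball e 1 x) = (y == x) || e x y.
Proof.
rewrite in_ballS in_ball0; congr (_ || _).
apply/existsP/idP => [[z /andP[]]|exy]; first by rewrite in_ball0 => /eqP ->.
by exists x; rewrite in_ball0 eqxx.
Qed.

Lemma dist_eq0 x y : (dist e x y == 0) = (y == x).
Proof.
have [N cardT] : exists N, #|T| = N.+1.
  by exists #|T|.-1; rewrite prednK //; apply/card_gt0P; exists x.
rewrite /dist cardT /= -in_ball0.
by case: (y \in ball e 0 x).
Qed.

Lemma resolving_setT : resolving e [set: T].
Proof.
apply/forallP => x; apply/forallP => y; apply/implyP => /forall_inP/(_ y (in_setT y)).
have /eqP -> : dist e y y == 0 by rewrite dist_eq0.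
by rewrite dist_eq0 eq_sym.
Qed.

Lemma dist_common_neighbour x y :
  2 < #|T| -> [exists z, e x z && e z y] ->
  dist e x y = if x == y then 0 else if e x y then 1 else 2.
Proof.
move=> T_gt2 /existsP[z /andP[exz ezy]].
have [N cardT] : exists N, #|T| = N.+3 by exists (#|T| - 3); lia.
have y_ball2 : y \in ball e 2 x.
  by rewrite in_ballS; apply/orP; right; apply/existsP; exists z; rewrite in_ball1 exz orbT.
rewrite /dist cardT /= y_ball2 in_ball1 in_ball0 [y == x]eq_sym.
by case: (x == y); case: (e x y).
Qed.

Lemma metric_dim_ge k :
  (forall W : {set T}, resolving e W -> k <= #|W|) -> k <= metric_dim e.
Proof.
move=> le_res; apply: (big_ind (fun j => k <= j)) => [|i j|W /le_res //].
- by rewrite -cardsT; apply: le_res; apply: resolving_setT.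
- by rewrite leq_min => -> ->.
Qed.

End Distance.

Section Lines.
Variables (T I : finType) (p : T -> I) (W : {set T}).

Definition line i := [set w in W | p w == i].

Lemma sum_card_line : \sum_i #|line i| = #|W|.
Proof.
rewrite -sum1_card (partition_big p predT) //=.
by apply: eq_bigr => i _; rewrite -sum1_card; apply: eq_bigl => w; rewrite inE.
Qed.

Lemma line_eq0 i w : #|line i| = 0 -> w \in W -> (p w == i) = false.
Proof.
move=> /eqP; rewrite cards_eq0 => /eqP line0 wW.
by apply/negbTE; apply: contraFN (in_set0 w) => pw; rewrite -line0 inE wW pw.
Qed.

Lemma line_eq1 i w u :
  #|line i| = 1 -> w \in W -> p w = i -> u \in W -> (p u == i) = (u == w).
Proof.
move=> /eqP/cards1P[z line_z] wW pw uW.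
have in_line v : v \in W -> p v = i -> v = z.
  by move=> vW pv; apply/set1P; rewrite -line_z inE vW pv eqxx.
apply/eqP/eqP => [pu|-> //].
by rewrite (in_line u uW pu) (in_line w wW pw).
Qed.

Lemma card_line_bound :
  2 * #|I| <= #|W| + #|[set i | #|line i| == 1]| + 2 * #|[set i | #|line i| == 0]|.
Proof.
rewrite -sum_card_line -!sum1_card !big_distrr /=.
rewrite [X in _ + X]big_mkcond [X in _ + X + _]big_mkcond -!big_split /=.
apply: leq_sum => i _; rewrite !inE.
by case: #|line i| => [|[|k]].
Qed.

Lemma card_singleton_lines :
  #|[set i | #|line i| == 1]| <= #|[set w in W | #|line (p w)| == 1]|.
Proof.
apply: leq_trans (leq_imset_card p _); apply/subset_leq_card/subsetP => i.
rewrite inE => /eqP line1; have /card_gt0P[w] : 0 < #|line i| by rewrite line1.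
rewrite inE => /andP[wW /eqP pw].
by apply/imsetP; exists w => //; rewrite inE wW pw line1.
Qed.

End Lines.

Lemma exists_ord_neq2 k (a b : 'I_k) : 2 < k -> exists c : 'I_k, (c != a) && (c != b).
Proof.
move=> k_gt2; have : 0 < #|~: [set a; b]|.
  by rewrite cardsCs setCK card_ord cards2; case: (a != b); lia.
by case/card_gt0P => c; rewrite !inE negb_or => cab; exists c.
Qed.

Section TensorComplete.
Variables (m n : nat).
Hypotheses (m_gt2 : 2 < m) (n_gt2 : 2 < n).

Local Notation G := (tensor (complete_graph m) (complete_graph n)).

Definition collinear (x u : 'I_m * 'I_n) := (u.1 == x.1) || (u.2 == x.2).

Lemma dist_tensor_complete x y :
  dist G x y = if x == y then 0 else if collinear x y then 2 else 1.
Proof.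
rewrite dist_common_neighbour ?card_prod ?card_ord; last 2 first.
- by nia.
- have [c1 /andP[c1x c1y]] := exists_ord_neq2 x.1 y.1 m_gt2.
  have [c2 /andP[c2x c2y]] := exists_ord_neq2 x.2 y.2 n_gt2.
  apply/existsP; exists (c1, c2).
  by rewrite /tensor /complete_graph /= c1y c2y ![x.1 == _]eq_sym ![x.2 == _]eq_sym c1x c2x.
rewrite /tensor /complete_graph /collinear [y.1 == _]eq_sym [y.2 == _]eq_sym.
by case: (x == y); case: (x.1 == y.1); case: (x.2 == y.2).
Qed.

Section Resolving.
Variable W : {set 'I_m * 'I_n}.
Hypothesis W_res : resolving G W.

Lemma resolving_collinear_inj x y :
  x \notin W -> y \notin W -> {in W, collinear x =1 collinear y} -> x = y.
Proof.
move=> xW yW xy_coll; apply/eqP.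
move: W_res => /forallP/(_ x)/forallP/(_ y)/implyP; apply.
apply/forall_inP => u uW; rewrite !dist_tensor_complete xy_coll //.
by rewrite !(eq_sym _ u) (negbTE (memPn xW u uW)) (negbTE (memPn yW u uW)).
Qed.

Local Notation row := (line fst W).
Local Notation col := (line snd W).

Definition isolated := [set w in W | (#|row w.1| == 1) && (#|col w.2| == 1)].

Lemma card_empty_rows_le1 : #|[set i | #|row i| == 0]| <= 1.
Proof.
apply/card_le1_eqP => i i'; rewrite !inE => /eqP ri /eqP ri'.
pose j : 'I_n := Ordinal (ltnW (ltnW n_gt2)).
have : (i, j) = (i', j).
  apply: resolving_collinear_inj.
  - by apply/negP => /(line_eq0 ri) /=; rewrite eqxx.
  - by apply/negP => /(line_eq0 ri') /=; rewrite eqxx.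
  - by move=> u uW; rewrite /collinear /= (line_eq0 ri uW) (line_eq0 ri' uW).
by case.
Qed.

Lemma card_empty_cols_le1 : #|[set j | #|col j| == 0]| <= 1.
Proof.
apply/card_le1_eqP => j j'; rewrite !inE => /eqP cj /eqP cj'.
pose i : 'I_m := Ordinal (ltnW (ltnW m_gt2)).
have : (i, j) = (i, j').
  apply: resolving_collinear_inj.
  - by apply/negP => /(line_eq0 cj) /=; rewrite eqxx.
  - by apply/negP => /(line_eq0 cj') /=; rewrite eqxx.
  - by move=> u uW; rewrite /collinear /= (line_eq0 cj uW) (line_eq0 cj' uW) !orbF.
by case.
Qed.

Lemma card_isolated_le1 : #|isolated| <= 1.
Proof.
apply/card_le1_eqP => -[a b] [a' b']; rewrite !inE /=.
move=> /and3P[abW /eqP ra /eqP cb] /and3P[a'b'W /eqP ra' /eqP cb'].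
apply/eqP; apply: contraT => ne.
have : (a, b') = (a', b).
  apply: resolving_collinear_inj.
  - apply: contra ne => xW.
    have xab : (a, b') = (a, b) by apply/eqP; rewrite -(line_eq1 ra abW erefl xW).
    have xa'b' : (a, b') = (a', b') by apply/eqP; rewrite -(line_eq1 cb' a'b'W erefl xW).
    by rewrite -xab -xa'b'.
  - apply: contra ne => xW.
    have xab : (a', b) = (a, b) by apply/eqP; rewrite -(line_eq1 cb abW erefl xW).
    have xa'b' : (a', b) = (a', b') by apply/eqP; rewrite -(line_eq1 ra' a'b'W erefl xW).
    by rewrite -xab -xa'b'.
  - move=> u uW; rewrite /collinear /= (line_eq1 ra abW erefl uW).
    rewrite (line_eq1 cb' a'b'W erefl uW) (line_eq1 ra' a'b'W erefl uW).
    by rewrite (line_eq1 cb abW erefl uW) orbC.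
by case=> ea eb; rewrite ea eb eqxx in ne.
Qed.

Lemma isolated_empty_row_col i j :
  #|row i| = 0 -> #|col j| = 0 -> isolated = set0.
Proof.
move=> ri cj; apply/setP => -[a b]; rewrite !inE /=.
apply/negbTE/negP => /and3P[abW /eqP ra /eqP cb].
have : (a, j) = (i, b).
  apply: resolving_collinear_inj.
  - by apply/negP => /(line_eq0 cj) /=; rewrite eqxx.
  - by apply/negP => /(line_eq0 ri) /=; rewrite eqxx.
  - move=> u uW; rewrite /collinear /= (line_eq1 ra abW erefl uW).
    by rewrite (line_eq0 cj uW) (line_eq0 ri uW) (line_eq1 cb abW erefl uW) orbF.
by case=> ai _; move: (line_eq0 ri abW); rewrite /= ai eqxx.
Qed.

Lemma card_singleton_rows_cols :
  #|[set i | #|row i| == 1]| + #|[set j | #|col j| == 1]| <= #|W| + #|isolated|.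
Proof.
apply: leq_trans (leq_add (card_singleton_lines fst W) (card_singleton_lines snd W)) _.
rewrite -cardsUI; apply: leq_add; apply: subset_leq_card; apply/subsetP => w.
  by rewrite !inE => /orP[] /andP[].
by rewrite !inE => /andP[] /andP[-> ->] /andP[_ ->].
Qed.

Lemma card_empty_lines_isolated :
  #|[set i | #|row i| == 0]| + #|[set j | #|col j| == 0]| + #|isolated| <= 2.
Proof.
have := card_empty_rows_le1; have := card_empty_cols_le1; have := card_isolated_le1.
case: (set_0Vmem [set i | #|row i| == 0]) => [-> | [i]]; first by rewrite cards0; lia.
case: (set_0Vmem [set j | #|col j| == 0]) => [-> | [j]]; first by rewrite cards0; lia.
rewrite !inE => /eqP cj /eqP ri.
by rewrite (isolated_empty_row_col ri cj) cards0; lia.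
Qed.

Lemma resolving_card_bound : 2 * (m + n) <= 3 * #|W| + 4.
Proof.
have := card_line_bound fst W; have := card_line_bound snd W; rewrite !card_ord.
have := card_singleton_rows_cols; have := card_empty_lines_isolated.
(* [#|W|] occurs above under two convertible finType instances that lia
   would treat as distinct atoms. *)
set k := #|W|; clearbody k; lia.
Qed.

End Resolving.

End TensorComplete.

(* ceil(2(m+n-2)/3) = (2(m+n-2)+2) %/ 3 in nat *)
Theorem lemma3p5 (m n : nat) :
  3 <= m -> m <= n -> n <= 2 * m - 2 ->
  (2 * (m + n - 2) + 2) %/ 3 <= metric_dim (tensor (complete_graph m) (complete_graph n)).
Proof.
(* The bound does not need [n <= 2 * m - 2]. *)
move=> m_ge3 le_mn _; have n_ge3 : 2 < n by lia.
have ceil_bound k : 2 * (m + n) <= 3 * k + 4 -> (2 * (m + n - 2) + 2) %/ 3 <= k.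
  by move=> bound; rewrite -ltnS ltn_divLR //; lia.
apply: metric_dim_ge => W W_res.
exact/ceil_bound/(resolving_card_bound m_ge3 n_ge3 W_res).
Qed.
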